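(* Let $\mathcal{A}$ be a state tomography algorithm that, given $n$ copies of $\rho\in\mathbb{C}^{d\times d}$ and a parameter $\varepsilon$, outputs an estimate $\widehat{\rho}$ (a quantum state) achieving infidelity $1 - F(\rho,\widehat\rho) \le \varepsilon \le 1/2$. Then letting $\rho' = \Delta_{2\varepsilon}(\widehat{\rho})$, we have $D_{KL}(\rho\|\rho') \le 16\varepsilon\,(2 + \ln(d/(2\varepsilon)))$.
   Context: The fidelity is $F(\rho,\sigma) = \|\sqrt\rho\sqrt\sigma\|_1$ (trace norm), and infidelity is $1-F(\rho,\sigma)$. For $0\le\epsilon\le 1$, the depolarizing channel is $\Delta_\epsilon(\rho) = (1-\epsilon)\rho + \epsilon I/d$. $D_{KL}(\rho\|\sigma) = \mathrm{tr}(\rho(\ln\rho-\ln\sigma))$. *)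

From HB Require Import structures.
From mathcomp Require Import all_boot all_order all_algebra.
From mathcomp Require Import sesquilinear spectral.
From mathcomp Require Import complex.
From mathcomp Require Import reals exp.

Set Implicit Arguments.
Unset Strict Implicit.
Unset Printing Implicit Defensive.

Import Order.TTheory GRing.Theory Num.Theory ComplexField.
Local Open Scope ring_scope.
Local Open Scope complex_scope.

Section QI.
Variable R : realType.
Local Notation C := (R[i]).

Definition adjmx m n (A : 'M[C]_(m, n)) : 'M[C]_(n, m) := map_mx (@Num.conj C) (A ^T).

Definition psdmx n (A : 'M[C]_n) : Prop :=
  A \is hermsymmx /\ forall v : 'rV[C]_n, 0 <= (v *m A *m adjmx v) 0 0.

Definition density n (rho : 'M[C]_n) : Prop := psdmx rho /\ \tr rho = 1.

(* functional calculus f(A) for a Hermitian (normal) matrix A, applying the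
   real function f to the (real) eigenvalues in a spectral decomposition
   A = U^-1 diag(lambda) U with U unitary (from mathcomp's spectral.v). *)
Definition mxfun n (f : R -> R) (A : 'M[C]_n) : 'M[C]_n :=
  invmx (spectralmx A)
  *m diag_mx (map_mx (fun z : C => (f (complex.Re z))%:C) (spectral_diag A))
  *m spectralmx A.

Definition msqrt n (A : 'M[C]_n) := mxfun (@Num.sqrt R) A.
Definition mlog n (A : 'M[C]_n) := mxfun (@ln R) A.

Definition trace_norm n (X : 'M[C]_n) : R := complex.Re (\tr (msqrt (adjmx X *m X))).

Definition fidelity n (rho sigma : 'M[C]_n) : R :=
  trace_norm (msqrt rho *m msqrt sigma).

Definition depolarize n (eps : R) (rho : 'M[C]_n) : 'M[C]_n :=
  ((1 - eps)%:C) *: rho + ((eps / n%:R)%:C) *: 1%:M.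

Definition DKL n (rho sigma : 'M[C]_n) : R :=
  complex.Re (\tr (rho *m (mlog rho - mlog sigma))).

End QI.

(* Diagonalise rho = U^* diag(p) U and rhohat = V^* diag(q) V.  The squared moduli
   w_ij of the entries of the unitary U V^* form a doubly stochastic matrix, and
   both quantities of the statement become classical in terms of w: with
   s = (1 - 2 eps) q + 2 eps / d, the spectrum of the depolarised estimate,
     D_KL(rho || Delta_{2 eps}(rhohat)) = sum_i p_i ln p_i - sum_ij w_ij p_i ln s_j,
     F(rho, rhohat)^2 <= tr(sqrt rho sqrt rhohat) = sum_ij w_ij sqrt(p_i q_j).
   The fidelity bound comes from F = tr(Z sqrt rho sqrt rhohat) for a partial
   isometry Z and Cauchy-Schwarz for the Hilbert-Schmidt product of
   rhohat^(1/4) Z rho^(1/4) and rhohat^(1/4) rho^(1/4).  Since p_i <= M s_j with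
   M = d / (2 eps), the scalar inequality
     p ln (p / s) <= (p - s) + (3 + ln M) (sqrt p - sqrt s)^2
   summed against w bounds the divergence by 2 (3 + ln M) (1 - sum_ij w_ij sqrt(p_i s_j)),
   and the affinity is at least (1 - 2 eps) (1 - eps)^2 >= 1 - 4 eps. *)

From mathcomp Require Import all_boot all_order all_algebra.
From mathcomp Require Import sesquilinear spectral.
From mathcomp Require Import complex.
From mathcomp Require Import reals exp.
From mathcomp Require Import ring lra.

Set Implicit Arguments.
Unset Strict Implicit.
Unset Printing Implicit Defensive.

Import Order.TTheory GRing.Theory Num.Theory ComplexField.
Local Open Scope ring_scope.

Section ConjugateTranspose.
Variable C : numClosedFieldType.
Local Open Scope sesquilinear_scope.

Lemma trmxC_mul m n p (A : 'M[C]_(m, n)) (B : 'M[C]_(n, p)) :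
  (A *m B)^t* = B^t* *m A^t*.
Proof. by rewrite trmx_mul map_mxM. Qed.

Lemma trmxC1 n : (1%:M : 'M[C]_n)^t* = 1%:M.
Proof. by rewrite trmx1 map_mx1. Qed.

Lemma trmxCB n (A B : 'M[C]_n) : (A - B)^t* = A^t* - B^t*.
Proof. by rewrite linearB /= map_mxB. Qed.

Lemma trmxC_diag n (a : 'rV[C]_n) : (diag_mx a)^t* = diag_mx (map_mx Num.conj a).
Proof. by rewrite tr_diag_mx map_diag_mx. Qed.

Lemma diag_mxM n (a b : 'rV[C]_n) :
  diag_mx a *m diag_mx b = diag_mx (\row_k (a 0 k * b 0 k)).
Proof.
apply/matrixP => i j; rewrite mul_diag_mx !mxE.
by case: eqP => [->|_]; rewrite ?mulr1n ?mulr0n ?mulr0.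
Qed.

Lemma unitarymx_trmxC_mul n (U : 'M[C]_n) : U \is unitarymx -> U^t* *m U = 1%:M.
Proof. by move=> Uu; have := mulmxKtV 1%:M Uu erefl; rewrite mul1mx. Qed.

Lemma unitarymx_mul_trmxC n (U : 'M[C]_n) : U \is unitarymx -> U *m U^t* = 1%:M.
Proof. by move/unitarymxP. Qed.

Lemma mxtrace_unitary_conj n (U M : 'M[C]_n) : U \is unitarymx ->
  \tr (U^t* *m M *m U) = \tr M.
Proof. by move=> Uu; rewrite mxtrace_mulC mulmxA unitarymx_mul_trmxC // mul1mx. Qed.

Lemma unitary_conj_diagM n (U : 'M[C]_n) (a b : 'rV[C]_n) : U \is unitarymx ->
  (U^t* *m diag_mx a *m U) *m (U^t* *m diag_mx b *m U)
    = U^t* *m diag_mx (\row_k (a 0 k * b 0 k)) *m U.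
Proof.
move=> Uu; rewrite !mulmxA -(mulmxA (U^t* *m diag_mx a) U) (unitarymx_mul_trmxC Uu).
by rewrite mulmx1 -(mulmxA (U^t*) (diag_mx a)) diag_mxM.
Qed.

Lemma mxtrace_conj_diagM n (U V : 'M[C]_n) (a b : 'rV[C]_n) :
  \tr ((U^t* *m diag_mx a *m U) *m (V^t* *m diag_mx b *m V))
    = \sum_i \sum_j a 0 i * b 0 j * `|(U *m V^t*) i j| ^+ 2.
Proof.
have -> : \tr ((U^t* *m diag_mx a *m U) *m (V^t* *m diag_mx b *m V))
    = \tr (diag_mx a *m (U *m V^t*) *m diag_mx b *m (U *m V^t*)^t*).
  by rewrite trmxC_mul trmxCK -!mulmxA mxtrace_mulC !mulmxA.
apply: eq_bigr => i _; rewrite !mxE; apply: eq_bigr => j _.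
rewrite mul_mx_diag mul_diag_mx !mxE normCK.
by rewrite -!mulrA; congr (_ * _); rewrite mulrCA.
Qed.

Lemma hermitian_spectralE n (A : 'M[C]_n) : A \is hermsymmx ->
  A = (spectralmx A)^t* *m diag_mx (spectral_diag A) *m spectralmx A.
Proof.
move=> /hermitian_normalmx /orthomx_spectralP {1}->.
by rewrite invmx_unitary // spectral_unitarymx.
Qed.

Lemma diag_mx_intertwine_map n (T : 'M[C]_n) (l s : 'rV[C]_n) (g : C -> C) :
  diag_mx l *m T = T *m diag_mx s ->
  diag_mx (map_mx g l) *m T = T *m diag_mx (map_mx g s).
Proof.
move=> /matrixP lTs; apply/matrixP => i j; have := lTs i j.
rewrite !mul_diag_mx !mul_mx_diag !mxE.
have [->|Tij_neq0] := eqVneq (T i j) 0; first by rewrite !mulr0 !mul0r.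
move=> lTs_ij; have -> : l 0 i = s 0 j by apply: (mulIf Tij_neq0); rewrite lTs_ij mulrC.
by rewrite mulrC.
Qed.

Lemma unitary_diag_map_eq n (S V : 'M[C]_n) (l s : 'rV[C]_n) (g : C -> C) :
  S \is unitarymx -> V \is unitarymx ->
  S^t* *m diag_mx l *m S = V^t* *m diag_mx s *m V ->
  S^t* *m diag_mx (map_mx g l) *m S = V^t* *m diag_mx (map_mx g s) *m V.
Proof.
move=> Su Vu E; pose T := S *m V^t*.
have Tu : T \is unitarymx by rewrite mul_unitarymx // trmxC_unitary.
have S_eq : S = T *m V by rewrite -mulmxA unitarymx_trmxC_mul // mulmx1.
have lT : diag_mx l *m T = T *m diag_mx s.
  have := congr1 (fun X => S *m X *m V^t*) E.
  rewrite !mulmxA unitarymx_mul_trmxC // mul1mx -!mulmxA unitarymx_mul_trmxC //.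
  by rewrite mulmx1 !mulmxA.
clearbody T; rewrite S_eq trmxC_mul !mulmxA -(mulmxA _ _ T) (diag_mx_intertwine_map g lT).
by rewrite !mulmxA -(mulmxA _ _ T) unitarymx_trmxC_mul // mulmx1.
Qed.

End ConjugateTranspose.

Section HilbertSchmidt.
Variable C : numClosedFieldType.
Local Open Scope sesquilinear_scope.

Definition hsdot n (X Y : 'M[C]_n) := \tr (X *m Y^t*).

Lemma hsdotE n (X Y : 'M[C]_n) : hsdot X Y = dotmx (mxvec X) (mxvec Y).
Proof.
rewrite /hsdot dotmxE /mxtrace mxE (reindex _ (curry_mxvec_bij _ _)) /=.
rewrite (eq_bigr (fun p : 'I_n * 'I_n => X p.1 p.2 * (Y p.1 p.2)^*)); last first.
  by case=> i j _ /=; rewrite !mxE !mxvecE.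
rewrite -(pair_bigA _ (fun i j => X i j * (Y i j)^*)) /=.
by apply: eq_bigr => i _; rewrite mxE; apply: eq_bigr => j _; rewrite !mxE.
Qed.

Lemma hsdot_ge0 n (X : 'M[C]_n) : 0 <= hsdot X X.
Proof. by rewrite hsdotE dnorm_ge0. Qed.

Lemma hsdot_CauchySchwarz n (X Y : 'M[C]_n) :
  `|hsdot X Y| ^+ 2 <= hsdot X X * hsdot Y Y.
Proof. by rewrite !hsdotE; exact: (CauchySchwarz (@dotmx C _) _ _).1. Qed.

Lemma hsdot_norm_le1 n (X Y : 'M[C]_n) :
  hsdot X X <= 1 -> hsdot Y Y <= 1 -> `|hsdot X Y| <= 1.
Proof.
move=> X_le1 Y_le1; rewrite -(expr_le1 (n := 2)) //.
exact: le_trans (hsdot_CauchySchwarz X Y) (mulr_ile1 (hsdot_ge0 X) (hsdot_ge0 Y) _ _).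
Qed.

Lemma hsdot_mul_proj_le1 n (A G : 'M[C]_n) :
  A^t* = A -> G^t* = G -> G *m G = G -> \tr (A *m A) = 1 ->
  hsdot (A *m G) (A *m G) <= 1.
Proof.
move=> A_herm G_herm G_idem trAA.
have IG_herm : (1%:M - G)^t* = 1%:M - G by rewrite trmxCB trmxC1 G_herm.
have IG_idem : (1%:M - G) *m (1%:M - G) = 1%:M - G.
  by rewrite mulmxBl mul1mx mulmxBr mulmx1 G_idem subrr subr0.
have hsdot_AG : hsdot (A *m G) (A *m G) = \tr (A *m G *m A).
  by rewrite /hsdot trmxC_mul A_herm G_herm mulmxA -(mulmxA A) G_idem.
have hsdot_AIG : hsdot (A *m (1%:M - G)) (A *m (1%:M - G)) = 1 - \tr (A *m G *m A).
  rewrite /hsdot trmxC_mul A_herm IG_herm mulmxA -(mulmxA A) IG_idem.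
  by rewrite mulmxBr mulmx1 mulmxBl raddfB /= trAA.
by rewrite hsdot_AG -subr_ge0 -hsdot_AIG hsdot_ge0.
Qed.

Lemma hsdot_partial_isometry_conj_le1 n (Z A : 'M[C]_n) :
  A^t* = A -> \tr (A *m A) = 1 ->
  (Z^t* *m Z) *m (Z^t* *m Z) = Z^t* *m Z ->
  hsdot (Z *m A *m Z^t*) (Z *m A *m Z^t*) <= 1.
Proof.
move=> A_herm trAA; set G := Z^t* *m Z => G_idem.
have G_herm : G^t* = G by rewrite trmxC_mul trmxCK.
have -> : hsdot (Z *m A *m Z^t*) (Z *m A *m Z^t*) = `|hsdot (A *m G) (G *m A)|.
  rewrite -[LHS]ger0_norm ?hsdot_ge0 //; congr `|_|.
  by rewrite /hsdot !trmxC_mul trmxCK A_herm /G -!mulmxA mxtrace_mulC !mulmxA.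
clearbody G.
have AG_le1 : hsdot (A *m G) (A *m G) <= 1 by exact: hsdot_mul_proj_le1.
have GA_le1 : hsdot (G *m A) (G *m A) <= 1.
  suff -> : hsdot (G *m A) (G *m A) = hsdot (A *m G) (A *m G) by [].
  by rewrite /hsdot !trmxC_mul A_herm G_herm mxtrace_mulC.
exact: hsdot_norm_le1.
Qed.

Lemma trace_partial_isometry_sqr_le n (Z C1 C2 : 'M[C]_n) :
  C1^t* = C1 -> C2^t* = C2 ->
  \tr (C1 *m C1 *m (C1 *m C1)) = 1 -> \tr (C2 *m C2 *m (C2 *m C2)) = 1 ->
  (Z^t* *m Z) *m (Z^t* *m Z) = Z^t* *m Z ->
  `|\tr (Z *m (C1 *m C1) *m (C2 *m C2))| ^+ 2 <= \tr (C1 *m C1 *m (C2 *m C2)).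
Proof.
move=> C1_herm C2_herm trA1 trA2 G_idem.
have A1_herm : (C1 *m C1)^t* = C1 *m C1 by rewrite trmxC_mul C1_herm.
have A2_herm : (C2 *m C2)^t* = C2 *m C2 by rewrite trmxC_mul C2_herm.
pose M1 := C2 *m Z *m C1; pose M2 := C2 *m C1.
have -> : \tr (Z *m (C1 *m C1) *m (C2 *m C2)) = hsdot M1 M2.
  by rewrite /hsdot trmxC_mul C1_herm C2_herm -!mulmxA [RHS]mxtrace_mulC !mulmxA.
have -> : \tr (C1 *m C1 *m (C2 *m C2)) = hsdot M2 M2.
  by rewrite /hsdot trmxC_mul C1_herm C2_herm -!mulmxA [RHS]mxtrace_mulC !mulmxA.
have M1_le1 : hsdot M1 M1 <= 1.
  have -> : hsdot M1 M1 = `|hsdot (Z *m (C1 *m C1) *m Z^t*) (C2 *m C2)|.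
    rewrite -[LHS]ger0_norm ?hsdot_ge0 //; congr `|_|.
    by rewrite /hsdot !trmxC_mul C1_herm C2_herm -!mulmxA [LHS]mxtrace_mulC !mulmxA.
  apply: hsdot_norm_le1; first exact: hsdot_partial_isometry_conj_le1.
  by rewrite /hsdot A2_herm trA2.
exact: le_trans (hsdot_CauchySchwarz M1 M2) (ler_piMl (hsdot_ge0 _) M1_le1).
Qed.

Lemma polar_partial_isometry n (B X : 'M[C]_n) (sg : 'rV[C]_n) :
  X \is unitarymx -> (forall k, 0 <= sg 0 k) ->
  B^t* *m B = X^t* *m diag_mx (\row_k (sg 0 k ^+ 2)) *m X ->
  exists2 Z : 'M[C]_n,
    (Z^t* *m Z) *m (Z^t* *m Z) = Z^t* *m Z & \tr (Z *m B) = \sum_k sg 0 k.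
Proof.
move=> Xu sg_ge0 BB.
pose N := B *m X^t*.
have NN : N^t* *m N = diag_mx (\row_k (sg 0 k ^+ 2)).
  rewrite /N trmxC_mul trmxCK -mulmxA (mulmxA (B^t*)) BB !mulmxA.
  by rewrite unitarymx_mul_trmxC // mul1mx -mulmxA unitarymx_mul_trmxC // mulmx1.
(* [Y] is the isometric factor of the polar decomposition of [N]; the junk
   value [0^-1 = 0] makes it vanish on the kernel of [B]. *)
pose c := \row_k (sg 0 k)^-1.
have c_herm : (diag_mx c)^t* = diag_mx c.
  by rewrite trmxC_diag; congr diag_mx; apply/rowP => k; rewrite !mxE geC0_conj ?invr_ge0.
pose Y := N *m diag_mx c.
have YY : Y^t* *m Y = diag_mx (\row_k (c 0 k * sg 0 k ^+ 2 * c 0 k)).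
  rewrite /Y trmxC_mul c_herm mulmxA -(mulmxA (diag_mx c)) NN !diag_mxM.
  by congr diag_mx; apply/rowP => k; rewrite !mxE.
have YYY : Y *m (Y^t* *m Y) = Y.
  rewrite YY /Y -mulmxA diag_mxM; congr (_ *m diag_mx _); apply/rowP => k; rewrite !mxE.
  have [->|sg_neq0] := eqVneq (sg 0 k) 0; first by rewrite invr0 !mul0r.
  by field.
exists (X^t* *m Y^t*).
  have -> : (X^t* *m Y^t*)^t* *m (X^t* *m Y^t*) = Y *m Y^t*.
    by rewrite trmxC_mul !trmxCK mulmxA -(mulmxA Y) unitarymx_mul_trmxC // mulmx1.
  by rewrite mulmxA -(mulmxA Y) YYY.
rewrite -mulmxA mxtrace_mulC -mulmxA -/N /Y trmxC_mul c_herm -mulmxA NN diag_mxM.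
rewrite mxtrace_diag; apply: eq_bigr => k _; rewrite !mxE.
have [->|sg_neq0] := eqVneq (sg 0 k) 0; first by rewrite invr0 mul0r.
by rewrite expr2 mulrA mulVf // mul1r.
Qed.

Lemma singular_values_sqr_le n (C1 C2 X : 'M[C]_n) (sg : 'rV[C]_n) :
  C1^t* = C1 -> C2^t* = C2 ->
  \tr (C1 *m C1 *m (C1 *m C1)) = 1 -> \tr (C2 *m C2 *m (C2 *m C2)) = 1 ->
  X \is unitarymx -> (forall k, 0 <= sg 0 k) ->
  (C1 *m C1 *m (C2 *m C2))^t* *m (C1 *m C1 *m (C2 *m C2))
    = X^t* *m diag_mx (\row_k (sg 0 k ^+ 2)) *m X ->
  (\sum_k sg 0 k) ^+ 2 <= \tr (C1 *m C1 *m (C2 *m C2)).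
Proof.
move=> C1_herm C2_herm trA1 trA2 X_unitary sg_ge0 BB.
have [Z Z_idem trZB] := polar_partial_isometry X_unitary sg_ge0 BB.
rewrite -(ger0_norm (sumr_ge0 _ (fun k _ => sg_ge0 k))) -trZB mulmxA.
exact: trace_partial_isometry_sqr_le.
Qed.

End HilbertSchmidt.

Section ScalarBounds.
Variable R : realType.

Lemma ln_le_subr1 (t : R) : 0 < t -> ln t <= t - 1.
Proof. by move=> t_gt0; have := @le_ln1Dx R (t - 1); rewrite addrCA subrr addr0; apply; lra. Qed.

Lemma sqr_mul_ln_le (M t : R) : 1 <= M -> 0 < t -> t ^+ 2 <= M ->
  2 * t ^+ 2 * ln t <= t ^+ 2 - 1 + (3 + ln M) * (t - 1) ^+ 2.
Proof.
move=> M_ge1 t_gt0 t2_le.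
have lnt_le := ln_le_subr1 t_gt0.
have lnM_ge0 : 0 <= ln M by exact: ln_ge0.
have [t_le1|t_gt1] := lerP t 1.
  have t2_lnt_le : t ^+ 2 * ln t <= t ^+ 2 * (t - 1) by rewrite ler_pM2l ?exprn_gt0.
  have lnM_term_ge0 : 0 <= ln M * (t - 1) ^+ 2 by rewrite mulr_ge0 ?sqr_ge0.
  have cube_le0 : (t - 1) ^+ 2 * (t - 1) <= 0 by rewrite mulr_ge0_le0 ?sqr_ge0 //; lra.
  nra.
have lnt_ge0 : 0 <= ln t by rewrite ln_ge0 // ltW.
have two_lnt_le : 2 * ln t <= ln M.
  rewrite -[2]/(1 *+ 2) mulr_natl -lnXn // ler_ln ?posrE ?exprn_gt0 //.
  exact: lt_le_trans ltr01 M_ge1.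
have lnt_sqr_le : ln t * (t - 1) ^+ 2 <= ln M / 2 * (t - 1) ^+ 2.
  by rewrite ler_pM2r ?exprn_gt0 ?subr_gt0 //; lra.
have lnt_lin_le : ln t * (2 * t - 1) <= (t - 1) * (2 * t - 1) by rewrite ler_pM2r //; lra.
nra.
Qed.

Lemma kl_summand_le (M p s : R) : 1 <= M -> 0 <= p -> 0 < s -> p <= M * s ->
  p * ln p - p * ln s <= (p - s) + (3 + ln M) * (Num.sqrt p - Num.sqrt s) ^+ 2.
Proof.
move=> M_ge1 p_ge0 s_gt0 p_le.
have lnM_ge0 : 0 <= ln M by exact: ln_ge0.
have sqrt_s2 := sqr_sqrtr (ltW s_gt0).
have sqrt_s_gt0 : 0 < Num.sqrt s by rewrite sqrtr_gt0.
have [->|p_neq0] := eqVneq p 0.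
  by rewrite sqrtr0 !mul0r subrr !sub0r sqrrN sqrt_s2; nra.
have p_gt0 : 0 < p by rewrite lt_def p_neq0.
have [t t_gt0 sqrt_pE] : exists2 t, 0 < t & Num.sqrt p = t * Num.sqrt s.
  by exists (Num.sqrt p / Num.sqrt s); rewrite ?divr_gt0 ?sqrtr_gt0 ?divfK ?gt_eqF.
have pE : p = t ^+ 2 * s by rewrite -(sqr_sqrtr p_ge0) sqrt_pE exprMn sqrt_s2.
have ln_ratio : ln p - ln s = 2 * ln t.
  by rewrite pE lnM ?posrE ?exprn_gt0 // lnXn // addrK mulr_natl.
have t2_le : t ^+ 2 <= M by rewrite -(ler_pM2r s_gt0) -pE.
have := sqr_mul_ln_le M_ge1 t_gt0 t2_le.
rewrite -mulrBr ln_ratio sqrt_pE -{2}[Num.sqrt s]mul1r -mulrBl exprMn sqrt_s2 pE.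
nra.
Qed.

End ScalarBounds.

Section Coupling.
Variables (R : realType) (d : nat) (w : 'I_d -> 'I_d -> R).
Hypothesis w_ge0 : forall i j, 0 <= w i j.
Hypothesis w_row : forall i, \sum_j w i j = 1.
Hypothesis w_col : forall j, \sum_i w i j = 1.

Lemma coupling_sum_l (f : 'I_d -> R) : \sum_i \sum_j f i * w i j = \sum_i f i.
Proof. by apply: eq_bigr => i _; rewrite -mulr_sumr w_row mulr1. Qed.

Lemma coupling_sum_r (g : 'I_d -> R) : \sum_i \sum_j g j * w i j = \sum_j g j.
Proof. by rewrite exchange_big; apply: eq_bigr => j _; rewrite -mulr_sumr w_col mulr1. Qed.

Lemma coupling_relent_le (M : R) (p s : 'I_d -> R) :
  1 <= M -> (forall i, 0 <= p i) -> \sum_i p i = 1 ->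
  (forall j, 0 < s j) -> \sum_j s j = 1 -> (forall i j, p i <= M * s j) ->
  \sum_i p i * ln (p i) - \sum_i \sum_j p i * ln (s j) * w i j
    <= 2 * (3 + ln M) * (1 - \sum_i \sum_j Num.sqrt (p i) * Num.sqrt (s j) * w i j).
Proof.
move=> M_ge1 p_ge0 p_sum1 s_gt0 s_sum1 p_le; set K := 3 + ln M.
have -> : \sum_i p i * ln (p i) - \sum_i \sum_j p i * ln (s j) * w i j =
          \sum_i \sum_j w i j * (p i * ln (p i) - p i * ln (s j)).
  rewrite -(coupling_sum_l (fun i => p i * ln (p i))) -sumrB.
  by apply: eq_bigr => i _; rewrite -sumrB; apply: eq_bigr => j _; ring.
apply: le_trans (_ : _ <= \sum_i \sum_j w i j *
    ((p i - s j) + K * (Num.sqrt (p i) - Num.sqrt (s j)) ^+ 2)) _.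
  do 2!apply: ler_sum => ? _; exact/ler_wpM2l/kl_summand_le.
rewrite le_eqVlt; apply/predU1l.
have expand i j : w i j * ((p i - s j) + K * (Num.sqrt (p i) - Num.sqrt (s j)) ^+ 2)
    = (1 + K) * (p i * w i j) + (K - 1) * (s j * w i j)
      - 2 * K * (Num.sqrt (p i) * Num.sqrt (s j) * w i j).
  by rewrite sqrrB sqr_sqrtr // sqr_sqrtr ?ltW //; ring.
under eq_bigr => i _ do rewrite (eq_bigr _ (fun j _ => expand i j)) sumrB big_split /=
  -(mulr_sumr _ _ _ (1 + K)) -(mulr_sumr _ _ _ (K - 1)) -(mulr_sumr _ _ _ (2 * K)).
rewrite sumrB big_split /= -!mulr_sumr coupling_sum_l coupling_sum_r p_sum1 s_sum1.
ring.
Qed.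

Lemma depolarized_relent_le (eps : R) (p q : 'I_d -> R) :
  0 < eps -> eps <= 1 / 2 ->
  (forall i, 0 <= p i) -> \sum_i p i = 1 -> (forall j, 0 <= q j) -> \sum_j q j = 1 ->
  (1 - eps) ^+ 2 <= \sum_i \sum_j Num.sqrt (p i) * Num.sqrt (q j) * w i j ->
  \sum_i p i * ln (p i)
    - \sum_i \sum_j p i * ln ((1 - 2 * eps) * q j + 2 * eps / d%:R) * w i j
    <= 16 * eps * (2 + ln (d%:R / (2 * eps))).
Proof.
move=> eps_gt0 eps_le p_ge0 p_sum1 q_ge0 q_sum1 affinity_ge.
have [i0 _|no_index] := pickP (@predT 'I_d); last first.
  by move: p_sum1; rewrite big_pred0 // => /eqP; rewrite eq_sym oner_eq0.
have d_ge1 : 1 <= d%:R :> R by rewrite ler1n (leq_ltn_trans (leq0n i0) (ltn_ord i0)).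
set c := 2 * eps / d%:R; set M := d%:R / (2 * eps).
set s := fun j => (1 - 2 * eps) * q j + c.
have c_gt0 : 0 < c by rewrite divr_gt0 //; lra.
have Mc : M * c = 1 by rewrite /M /c mulrA divfK ?mulfV //; lra.
have M_ge1 : 1 <= M by rewrite /M ler_pdivlMr ?mul1r; lra.
have lnM_ge0 : 0 <= ln M by exact: ln_ge0.
have s_ge_c j : c <= s j by rewrite lerDr mulr_ge0 //; lra.
have s_gt0 j : 0 < s j by exact: lt_le_trans (s_ge_c j).
have s_sum1 : \sum_j s j = 1.
  rewrite big_split /= -(mulr_sumr _ _ _ (1 - 2 * eps)) q_sum1 sumr_const card_ord.
  rewrite -[c *+ d]mulr_natr /c divfK; first lra.
  by rewrite gt_eqF // (lt_le_trans ltr01 d_ge1).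
have p_le i j : p i <= M * s j.
  have p_le1 : p i <= 1 by rewrite -p_sum1 (bigD1 i) //= lerDl sumr_ge0.
  by rewrite (le_trans p_le1) // -Mc ler_wpM2l ?(le_trans ler01 M_ge1).
have sqrt_s_ge j : (1 - 2 * eps) * Num.sqrt (q j) <= Num.sqrt (s j).
  rewrite -[X in X <= _]ger0_norm ?mulr_ge0 ?sqrtr_ge0 //; last lra.
  rewrite -sqrtr_sqr ler_wsqrtr // exprMn sqr_sqrtr //.
  have : 0 <= (1 - 2 * eps) * (2 * eps) * q j by rewrite !mulr_ge0 //; lra.
  rewrite /s /=; nra.
have BC_ge : (1 - 2 * eps) * (1 - eps) ^+ 2
    <= \sum_i \sum_j Num.sqrt (p i) * Num.sqrt (s j) * w i j.
  apply: le_trans (ler_wpM2l _ affinity_ge) _; first lra.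
  rewrite mulr_sumr; apply: ler_sum => i _; rewrite mulr_sumr; apply: ler_sum => j _.
  have := ler_wpM2l (mulr_ge0 (sqrtr_ge0 (p i)) (w_ge0 i j)) (sqrt_s_ge j); nra.
apply: le_trans (coupling_relent_le M_ge1 p_ge0 p_sum1 s_gt0 s_sum1 p_le) _.
have : (1 - 2 * eps) ^+ 2 <= (1 - 2 * eps) * (1 - eps) ^+ 2.
  by rewrite expr2; apply: ler_wpM2l; nra.
nra.
Qed.

End Coupling.

Section UnitaryDiagonal.
Variable R : realType.
Local Notation C := R[i].
Local Open Scope sesquilinear_scope.
Local Open Scope complex_scope.

Definition crow n (f : 'I_n -> R) : 'rV[C]_n := \row_k (f k)%:C.

Definition udiagmx n (U : 'M[C]_n) (f : 'I_n -> R) : 'M[C]_n :=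
  U^t* *m diag_mx (crow f) *m U.

Definition overlap n (U V : 'M[C]_n) (i j : 'I_n) : R :=
  complex.Re (`|(U *m V^t*) i j| ^+ 2).

Variables (n : nat) (U V : 'M[C]_n).
Hypotheses (U_unitary : U \is unitarymx) (V_unitary : V \is unitarymx).

Lemma conj_crow (f : 'I_n -> R) : map_mx Num.conj (crow f) = crow f.
Proof. by apply/rowP => k; rewrite !mxE; exact: conjc_real. Qed.

Lemma crowM (f g : 'I_n -> R) :
  \row_k (crow f 0 k * crow g 0 k) = crow (fun k => f k * g k).
Proof. by apply/rowP => k; rewrite !mxE rmorphM. Qed.

Lemma trmxC_udiagmx (f : 'I_n -> R) : (udiagmx U f)^t* = udiagmx U f.
Proof. by rewrite /udiagmx !trmxC_mul trmxCK trmxC_diag conj_crow mulmxA. Qed.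

Lemma udiagmxM (f g : 'I_n -> R) :
  udiagmx U f *m udiagmx U g = udiagmx U (fun k => f k * g k).
Proof. by rewrite /udiagmx (unitary_conj_diagM _ _ U_unitary) crowM. Qed.

Lemma eq_udiagmx (f g : 'I_n -> R) : f =1 g -> udiagmx U f = udiagmx U g.
Proof.
by move=> fg; rewrite /udiagmx; have -> : crow f = crow g by apply/rowP => k; rewrite !mxE fg.
Qed.

Lemma udiagmx_sqrtK (f : 'I_n -> R) : (forall k, 0 <= f k) ->
  udiagmx U (fun k => Num.sqrt (f k)) *m udiagmx U (fun k => Num.sqrt (f k)) = udiagmx U f.
Proof. by move=> f_ge0; rewrite udiagmxM; apply: eq_udiagmx => k; rewrite -expr2 sqr_sqrtr. Qed.

Lemma mxtrace_udiagmx (f : 'I_n -> R) : \tr (udiagmx U f) = (\sum_k f k)%:C.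
Proof.
rewrite /udiagmx (mxtrace_unitary_conj _ U_unitary) mxtrace_diag rmorph_sum.
by apply: eq_bigr => k _; rewrite mxE.
Qed.

Lemma map_crow (h : R -> R) (f : 'I_n -> R) :
  map_mx (fun z : C => (h (complex.Re z))%:C) (crow f) = crow (fun k => h (f k)).
Proof. by apply/rowP => k; rewrite !mxE. Qed.

Lemma udiagmx_normal (f : 'I_n -> R) : udiagmx U f \is normalmx.
Proof.
apply/orthomx_spectral_subproof; exists (U, crow f) => /=; first exact: U_unitary.
by rewrite (invmx_unitary U_unitary).
Qed.

Lemma mxfun_udiagmx (h : R -> R) (f : 'I_n -> R) :
  mxfun h (udiagmx U f) = udiagmx U (fun k => h (f k)).
Proof.
have S_unitary := spectral_unitarymx (udiagmx U f).
rewrite /mxfun (invmx_unitary S_unitary) /udiagmx -map_crow.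
apply: (unitary_diag_map_eq _ S_unitary U_unitary).
by rewrite -(invmx_unitary S_unitary); apply/esym/orthomx_spectralP/udiagmx_normal.
Qed.

Lemma depolarize_udiagmx (e : R) (q : 'I_n -> R) :
  depolarize e (udiagmx U q) = udiagmx U (fun j => (1 - e) * q j + e / n%:R).
Proof.
rewrite /udiagmx; have -> : diag_mx (crow (fun j => (1 - e) * q j + e / n%:R))
    = (1 - e)%:C *: diag_mx (crow q) + (e / n%:R)%:C *: 1%:M.
  apply/matrixP => i j; rewrite !mxE.
  by case: eqP => _; rewrite ?mulr1n ?mulr0n ?mulr0 ?addr0 // rmorphD rmorphM mulr1.
rewrite mulmxDr mulmxDl -!scalemxAr -!scalemxAl mulmx1.
by rewrite (unitarymx_trmxC_mul U_unitary).
Qed.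

Lemma overlapE i j : (overlap U V i j)%:C = `|(U *m V^t*) i j| ^+ 2.
Proof. by rewrite RRe_real // rpredX // normr_real. Qed.

Lemma overlap_ge0 i j : 0 <= overlap U V i j.
Proof. by rewrite -ler0c overlapE exprn_ge0. Qed.

Lemma overlap_row i : \sum_j overlap U V i j = 1.
Proof.
apply: complexI; rewrite rmorph1; transitivity (\sum_j `|(U *m V^t*) i j| ^+ 2).
  by rewrite rmorph_sum; apply: eq_bigr => j _; exact: overlapE.
have Vt_unitary : V^t* \is unitarymx by rewrite trmxC_unitary.
have W_unitary := mul_unitarymx U_unitary Vt_unitary.
have /matrixP /(_ i i) := unitarymx_mul_trmxC W_unitary.
rewrite !mxE eqxx mulr1n => <-.
by apply: eq_bigr => j _; rewrite normCK !mxE.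
Qed.

Lemma overlap_col j : \sum_i overlap U V i j = 1.
Proof.
apply: complexI; rewrite rmorph1; transitivity (\sum_i `|(U *m V^t*) i j| ^+ 2).
  by rewrite rmorph_sum; apply: eq_bigr => i _; exact: overlapE.
have Vt_unitary : V^t* \is unitarymx by rewrite trmxC_unitary.
have W_unitary := mul_unitarymx U_unitary Vt_unitary.
have /matrixP /(_ j j) := unitarymx_trmxC_mul W_unitary.
rewrite !mxE eqxx mulr1n => <-.
by apply: eq_bigr => i _; rewrite normCKC !mxE.
Qed.

Lemma mxtrace_udiagmx_mul (f g : 'I_n -> R) :
  \tr (udiagmx U f *m udiagmx V g)
    = (\sum_i \sum_j f i * g j * overlap U V i j)%:C.
Proof.
rewrite /udiagmx mxtrace_conj_diagM rmorph_sum; apply: eq_bigr => i _.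
rewrite rmorph_sum; apply: eq_bigr => j _; rewrite !rmorphM.
by congr (_ * _); [rewrite !mxE | exact: (esym (overlapE i j))].
Qed.

End UnitaryDiagonal.

Section Quantum.
Variable R : realType.
Local Notation C := R[i].
Local Open Scope sesquilinear_scope.
Local Open Scope complex_scope.

Lemma psdmx_trmxC_mul n (X : 'M[C]_n) : psdmx (X^t* *m X).
Proof.
split; first by rewrite qualifE expr0 scale1r; apply/eqP; rewrite trmxC_mul trmxCK.
move=> v; have -> : v *m (X^t* *m X) *m adjmx v = (v *m X^t*) *m (v *m X^t*)^t*.
  by rewrite trmxC_mul trmxCK !mulmxA.
by rewrite -dotmxE dnorm_ge0.
Qed.

Lemma psdmx_udiagmx n (A : 'M[C]_n) : psdmx A ->
  exists U f, [/\ U \is unitarymx, forall k, 0 <= f k & A = udiagmx U f].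
Proof.
move=> [A_herm A_psd].
set U := spectralmx A; set l := spectral_diag A.
have U_unitary : U \is unitarymx := spectral_unitarymx A.
have AE : A = U^t* *m diag_mx l *m U := hermitian_spectralE A_herm.
have l_ge0 k : 0 <= l 0 k.
  have UAU : U *m A *m U^t* = diag_mx l.
    rewrite [in LHS]AE !mulmxA (unitarymx_mul_trmxC U_unitary) mul1mx.
    by rewrite -mulmxA (unitarymx_mul_trmxC U_unitary) mulmx1.
  have := A_psd (row k U).
  have -> : (row k U *m A *m adjmx (row k U)) 0 0 = (U *m A *m U^t*) k k.
    by rewrite -row_mul !mxE; apply: eq_bigr => j _; rewrite !mxE.
  by rewrite UAU mxE eqxx mulr1n.
exists U, (fun k => complex.Re (l 0 k)); split => // [k|].
  by rewrite -ler0c RRe_real ?ger0_real.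
rewrite /udiagmx; have -> : crow (fun k => complex.Re (l 0 k)) = l.
  by apply/rowP => k; rewrite mxE RRe_real ?ger0_real.
exact: AE.
Qed.

Lemma density_udiagmx n (rho : 'M[C]_n) : density rho ->
  exists U p, [/\ U \is unitarymx, forall k, 0 <= p k, \sum_k p k = 1
                & rho = udiagmx U p].
Proof.
move=> [/psdmx_udiagmx [U [p [U_unitary p_ge0 rhoE]]] tr_rho].
exists U, p; split => //; apply: complexI.
by rewrite -(mxtrace_udiagmx U_unitary) -rhoE tr_rho.
Qed.

Lemma trace_norm_udiagmx n (B X : 'M[C]_n) (mu : 'I_n -> R) :
  X \is unitarymx -> B^t* *m B = udiagmx X mu ->
  trace_norm B = \sum_k Num.sqrt (mu k).
Proof.
move=> X_unitary BB.
by rewrite /trace_norm /adjmx BB /msqrt mxfun_udiagmx // mxtrace_udiagmx.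
Qed.

Lemma DKL_udiagmx n (U V : 'M[C]_n) (p s : 'I_n -> R) :
  U \is unitarymx -> V \is unitarymx ->
  DKL (udiagmx U p) (udiagmx V s)
    = \sum_i p i * ln (p i) - \sum_i \sum_j p i * ln (s j) * overlap U V i j.
Proof.
move=> U_unitary V_unitary.
rewrite /DKL /mlog !mxfun_udiagmx // mulmxBr raddfB /= udiagmxM //.
by rewrite mxtrace_udiagmx // mxtrace_udiagmx_mul // -rmorphB.
Qed.

Lemma fidelity_sqr_le_overlap n (U V : 'M[C]_n) (p q : 'I_n -> R) :
  U \is unitarymx -> V \is unitarymx ->
  (forall i, 0 <= p i) -> \sum_i p i = 1 -> (forall j, 0 <= q j) -> \sum_j q j = 1 ->
  fidelity (udiagmx U p) (udiagmx V q) ^+ 2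
    <= \sum_i \sum_j Num.sqrt (p i) * Num.sqrt (q j) * overlap U V i j.
Proof.
move=> U_unitary V_unitary p_ge0 p_sum1 q_ge0 q_sum1.
set C1 := udiagmx U (fun k => Num.sqrt (Num.sqrt (p k))).
set C2 := udiagmx V (fun k => Num.sqrt (Num.sqrt (q k))).
have A1E : msqrt (udiagmx U p) = udiagmx U (fun k => Num.sqrt (p k)).
  exact: mxfun_udiagmx.
have A2E : msqrt (udiagmx V q) = udiagmx V (fun k => Num.sqrt (q k)).
  exact: mxfun_udiagmx.
have C1C1 : C1 *m C1 = msqrt (udiagmx U p).
  by rewrite A1E (udiagmx_sqrtK U_unitary) // => k; exact: sqrtr_ge0.
have C2C2 : C2 *m C2 = msqrt (udiagmx V q).
  by rewrite A2E (udiagmx_sqrtK V_unitary) // => k; exact: sqrtr_ge0.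
have trA1 : \tr (C1 *m C1 *m (C1 *m C1)) = 1.
  by rewrite C1C1 A1E (udiagmx_sqrtK U_unitary) // (mxtrace_udiagmx U_unitary) p_sum1.
have trA2 : \tr (C2 *m C2 *m (C2 *m C2)) = 1.
  by rewrite C2C2 A2E (udiagmx_sqrtK V_unitary) // (mxtrace_udiagmx V_unitary) q_sum1.
set B := msqrt (udiagmx U p) *m msqrt (udiagmx V q).
have [X [mu [X_unitary mu_ge0 BB]]] := psdmx_udiagmx (psdmx_trmxC_mul B).
have fidE : fidelity (udiagmx U p) (udiagmx V q) = \sum_k Num.sqrt (mu k).
  exact: trace_norm_udiagmx X_unitary BB.
pose sg := crow (fun k => Num.sqrt (mu k)).
have sg_ge0 k : 0 <= sg 0 k by rewrite mxE ler0c sqrtr_ge0.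
have C1_herm : C1^t* = C1 by exact: trmxC_udiagmx.
have C2_herm : C2^t* = C2 by exact: trmxC_udiagmx.
have BB' : B^t* *m B = X^t* *m diag_mx (\row_k (sg 0 k ^+ 2)) *m X.
  rewrite BB /udiagmx; have -> : \row_k (sg 0 k ^+ 2) = crow mu.
    by apply/rowP => k; rewrite !mxE -rmorphXn sqr_sqrtr.
  by [].
have := singular_values_sqr_le C1_herm C2_herm trA1 trA2 X_unitary sg_ge0.
rewrite C1C1 C2C2 -/B => /(_ BB').
have -> : \sum_k sg 0 k = (fidelity (udiagmx U p) (udiagmx V q))%:C.
  by rewrite fidE rmorph_sum; apply: eq_bigr => k _; rewrite mxE.
by rewrite /B A1E A2E mxtrace_udiagmx_mul -rmorphXn lecR.
Qed.

End Quantum.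

Theorem theorem2p34 (R : realType) (d : nat) (rho rhohat : 'M[R[i]]_d) (eps : R) :
  density rho -> density rhohat ->
  0 < eps -> eps <= 1 / 2 ->
  1 - fidelity rho rhohat <= eps ->
  DKL rho (depolarize (2 * eps) rhohat)
    <= 16 * eps * (2 + ln (d%:R / (2 * eps))).
Proof.
move=> rho_density rhohat_density eps_gt0 eps_le infidelity_le.
have [U [p [U_unitary p_ge0 p_sum1 rhoE]]] := density_udiagmx rho_density.
have [V [q [V_unitary q_ge0 q_sum1 rhohatE]]] := density_udiagmx rhohat_density.
have affinity_ge : (1 - eps) ^+ 2
    <= \sum_i \sum_j Num.sqrt (p i) * Num.sqrt (q j) * overlap U V i j.
  apply: le_trans (fidelity_sqr_le_overlap U_unitary V_unitary p_ge0 p_sum1 q_ge0 q_sum1).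
  by rewrite -rhoE -rhohatE; nra.
rewrite rhoE rhohatE (depolarize_udiagmx V_unitary).
rewrite (DKL_udiagmx _ _ U_unitary V_unitary).
exact (depolarized_relent_le (overlap_ge0 U V) (overlap_row U_unitary V_unitary)
  (overlap_col U_unitary V_unitary) eps_gt0 eps_le p_ge0 p_sum1 q_ge0 q_sum1 affinity_ge).
Qed.
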